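(* Let $S$ be a dense subsemigroup of $((0,\infty),+)$ and let $A\subseteq S$. Then $A$ is quasi-central near zero if and only if there exist a dynamical system $(X,\langle T_s\rangle_{s\in S})$, points $x,y\in X$ such that the pair $(x,y)$ is $JIUR_0$, and a neighbourhood $U$ of $y$ such that $A=\{s\in S: T_s(x)\in U\}$.
   Context: ''Dense'' means dense in the usual topology of $(0,\infty)$. $\beta S$ is the Stone–Čech compactification of the discrete set $S$ (ultrafilters on $S$), with $+$ extended so that $(\beta S,+)$ is a compact right topological semigroup: $A\in p+q$ iff $\{x\in S:-x+A\in q\}\in p$, where $-x+A=\{y\in S:x+y\in A\}$. $O^{+}(S)=\{p\in\beta S: S\cap(0,\epsilon)\in p\text{ for every }\epsilon>0\}$, a compact right topological subsemigroup of $\beta S$; $K(O^{+}(S))$ is its smallest two-sided ideal and $\mathrm{Cl}$ is closure in $\beta S$. A set $A\subseteq S$ is quasi-central near zero iff there is an idempotent $p\in\mathrm{Cl}\,K(O^{+}(S))$ with $A\in p$. A dynamical system $(X,\langle T_s\rangle_{s\in S})$ consists of a compact Hausdorff space $X$ and continuous maps $T_s:X\to X$ with $T_s\circ T_t=T_{s+t}$. A subset $A\subseteq S$ is piecewise syndetic near zero iff there exist sequences $\langle F_n\rangle$ and $\langle\delta_n\rangle$ such that (1) for each $n$, $F_n$ is a finite nonempty subset of $(0,\frac1n)\cap S$ and $\delta_n\in(0,\frac1n)$, and (2) for every finite nonempty $G\subseteq S$ and every $\mu>0$ there is $x\in(0,\mu)\cap S$ with $(G\cap(0,\delta_n))+x\subseteq\bigcup_{t\in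 F_n}(-t+A)$ for all $n\in\mathbb{N}$. The pair $(x,y)$ is $JIUR_0$ (jointly intermittently uniformly recurrent near zero) iff for every neighbourhood $U$ of $y$, the set $\{s\in S: T_s(x)\in U\text{ and }T_s(y)\in U\}$ is piecewise syndetic near zero. *)

From Stdlib Require Import Reals List.
Open Scope R_scope.

Definition dense_subsemigroup (S : R -> Prop) : Prop :=
  (forall x, S x -> 0 < x) /\
  (forall x y, S x -> S y -> S (x + y)) /\
  (forall a b, 0 < a -> a < b -> exists s, S s /\ a < s /\ s < b).

(* Points of betaS are ultrafilters on S; subsets of S are predicates on R,
   and p A depends only on A restricted to S. *)
Definition ultrafilter (S : R -> Prop) (p : (R -> Prop) -> Prop) : Prop :=
  p S /\
  ~ p (fun _ => False) /\
  (forall A B, p A -> p B -> p (fun x => A x /\ B x)) /\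
  (forall A B : R -> Prop, p A -> (forall x, A x -> B x) -> p B) /\
  (forall A, p A \/ p (fun x => S x /\ ~ A x)).

Definition shiftset (S : R -> Prop) (x : R) (A : R -> Prop) : R -> Prop :=
  fun y => S y /\ A (x + y).

Definition bplus (S : R -> Prop) (p q : (R -> Prop) -> Prop) : (R -> Prop) -> Prop :=
  fun A => p (fun x => S x /\ q (shiftset S x A)).

Definition is_sum (S : R -> Prop) (r p q : (R -> Prop) -> Prop) : Prop :=
  forall A, r A <-> bplus S p q A.

Definition Oplus (S : R -> Prop) (p : (R -> Prop) -> Prop) : Prop :=
  ultrafilter S p /\
  forall eps, 0 < eps -> p (fun x => S x /\ 0 < x /\ x < eps).

Definition two_sided_ideal_Oplus (S : R -> Prop)
  (I : ((R -> Prop) -> Prop) -> Prop) : Prop :=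
  (exists q, I q) /\
  (forall q, I q -> Oplus S q) /\
  (forall p q r, Oplus S p -> I q -> is_sum S r p q -> I r) /\
  (forall p q r, Oplus S p -> I q -> is_sum S r q p -> I r).

(* K(O^+(S)) : the smallest two-sided ideal = intersection of all of them *)
Definition K_Oplus (S : R -> Prop) (q : (R -> Prop) -> Prop) : Prop :=
  forall I, two_sided_ideal_Oplus S I -> I q.

(* closure in betaS: every basic clopen {r : A in r} around p meets the set *)
Definition beta_closure (S : R -> Prop) (M : ((R -> Prop) -> Prop) -> Prop)
  (p : (R -> Prop) -> Prop) : Prop :=
  ultrafilter S p /\
  forall A, p A -> exists q, M q /\ q A.

Definition idempotent (S : R -> Prop) (p : (R -> Prop) -> Prop) : Prop :=
  ultrafilter S p /\ is_sum S p p p.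

Definition quasi_central_near_zero (S A : R -> Prop) : Prop :=
  exists p, idempotent S p /\ beta_closure S (K_Oplus S) p /\ p A.

Definition piecewise_syndetic_near_zero (S A : R -> Prop) : Prop :=
  exists (F : nat -> list R) (delta : nat -> R),
    (forall n : nat, (1 <= n)%nat ->
       F n <> nil /\
       (forall t, In t (F n) -> S t /\ 0 < t /\ t < 1 / INR n) /\
       0 < delta n /\ delta n < 1 / INR n) /\
    (forall (G : list R) (mu : R),
       G <> nil -> (forall g, In g G -> S g) -> 0 < mu ->
       exists x, S x /\ 0 < x /\ x < mu /\
         forall n : nat, (1 <= n)%nat ->
           forall g, In g G -> 0 < g -> g < delta n ->
             exists t, In t (F n) /\ shiftset S t A (g + x)).

Record topology (X : Type) : Type := {
  open : (X -> Prop) -> Prop;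
  open_full : open (fun _ => True);
  open_inter : forall U V, open U -> open V -> open (fun x => U x /\ V x);
  open_union : forall Fam : (X -> Prop) -> Prop,
      (forall U, Fam U -> open U) -> open (fun x => exists U, Fam U /\ U x)
}.
Arguments open {X} t _.

Definition compact_space {X : Type} (t : topology X) : Prop :=
  forall Fam : (X -> Prop) -> Prop,
    (forall U, Fam U -> open t U) ->
    (forall x, exists U, Fam U /\ U x) ->
    exists l : list (X -> Prop),
      (forall U, In U l -> Fam U) /\ (forall x, exists U, In U l /\ U x).

Definition hausdorff {X : Type} (t : topology X) : Prop :=
  forall x y : X, x <> y ->
    exists U V, open t U /\ open t V /\ U x /\ V y /\
                (forall z, U z -> V z -> False).

Definition continuous {X : Type} (t : topology X) (f : X -> X) : Prop :=
  forall V, open t V -> open t (fun x => V (f x)).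

Definition nbhd_top {X : Type} (t : topology X) (U : X -> Prop) (y : X) : Prop :=
  exists V, open t V /\ V y /\ (forall z, V z -> U z).

Definition dynamical_system (S : R -> Prop) {X : Type} (t : topology X)
  (T : R -> X -> X) : Prop :=
  compact_space t /\ hausdorff t /\
  (forall s, S s -> continuous t (T s)) /\
  (forall s u, S s -> S u -> forall z, T s (T u z) = T (s + u) z).

Definition JIUR0 (S : R -> Prop) {X : Type} (t : topology X)
  (T : R -> X -> X) (x y : X) : Prop :=
  forall U, nbhd_top t U y ->
    piecewise_syndetic_near_zero S (fun s => S s /\ U (T s x) /\ U (T s y)).

(* Everything happens in the compact right topological semigroup betaS of ultrafilters.

   If A lies in an idempotent p of cl K(O^+(S)), let S act on beta(S u {0}) by the continuous
   extensions of the translations, and take x the principal ultrafilter at 0 and y = p.  Then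
   T_s x is principal at s, so A is the set of return times of x to the clopen set {q | A in q};
   idempotence of p puts the joint return times of (x, y) to any neighbourhood of y into p,
   hence into a member of K(O^+(S)), and a set belonging to a member of K(O^+(S)) is piecewise
   syndetic near zero.

   Conversely, piecewise syndeticity near zero puts every set of joint return times to a
   neighbourhood of y into a member of K(O^+(S)); by compactness one point of cl K(O^+(S))
   contains them all.  Hence the ultrafilters q in cl K(O^+(S)) with q-lim T_s x = y = q-lim T_s y
   form a nonempty closed subsemigroup, Ellis' theorem gives an idempotent in it, and that
   idempotent contains A. *)

From Stdlib Require Import Reals List Lra Lia FunctionalExtensionality PropExtensionality
  ClassicalEpsilon.
From mathcomp Require classical_sets.
Open Scope R_scope.

Lemma zorn_maximal {T : Type} (P : (T -> Prop) -> Prop) :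
  (forall F : (T -> Prop) -> Prop, (forall X, F X -> P X) ->
     (forall X Y, F X -> F Y -> (forall x, X x -> Y x) \/ (forall x, Y x -> X x)) ->
     P (fun x => exists X, F X /\ X x)) ->
  exists A, P A /\ forall B, P B -> (forall x, A x -> B x) -> forall x, B x -> A x.
Proof.
  intros Hchain.
  assert (Hc : forall F : classical_sets.set (classical_sets.set T),
     classical_sets.subset F P ->
     classical_sets.total_on F classical_sets.subset ->
     P (classical_sets.bigcup F (fun X : classical_sets.set T => X))).
  { intros F FP Ftot.
    replace (classical_sets.bigcup F (fun X => X)) with (fun x => exists X, F X /\ X x).
    - apply Hchain; [exact FP|]. intros X Y FX FY. destruct (Ftot X Y FX FY); auto.
    - apply functional_extensionality; intro x; apply propositional_extensionality.
      split; [intros [X [FX Xx]]; exists X; auto | intros [X FX Xx]; eauto]. }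
  destruct (classical_sets.Zorn_bigcup Hc) as [A [PA Amax]].
  exists A; split; [exact PA|].
  intros B PB AB x Bx. apply NNPP; intro nAx.
  apply (Amax B); [|exact PB]. split; [exact AB|].
  intros BA. apply nAx, BA, Bx.
Qed.

Definition inter (l : list (R -> Prop)) : R -> Prop := fun x => forall B, In B l -> B x.

Definition FIP (S : R -> Prop) (G : (R -> Prop) -> Prop) : Prop :=
  forall l, (forall B, In B l -> G B) -> exists x, S x /\ inter l x.

Section Ultrafilters.

Context {S : R -> Prop}.

Section OneUltrafilter.

Context {p : (R -> Prop) -> Prop} (Up : ultrafilter S p).

Lemma uf_mono {A B} : p A -> (forall x, S x -> A x -> B x) -> p B.
Proof.
  destruct Up as [_ [_ [Hand [Hup _]]]]. intros pA AB.
  apply Hup with (A := fun x => A x /\ S x); [apply Hand; [exact pA|apply Up]|].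
  intros x [Ax Sx]; auto.
Qed.

Lemma uf_full : p S.
Proof. apply Up. Qed.

Lemma uf_and {A B} : p A -> p B -> p (fun x => A x /\ B x).
Proof. apply Up. Qed.

Lemma uf_nonempty {A} : p A -> exists x, S x /\ A x.
Proof.
  intros pA. apply NNPP; intro N. destruct Up as [_ [Hnot0 _]]. apply Hnot0.
  apply (uf_mono (uf_and pA uf_full)). intros x _ [Ax Sx]. apply N; eauto.
Qed.

Lemma uf_compl {A} : ~ p A -> p (fun x => S x /\ ~ A x).
Proof. destruct Up as [_ [_ [_ [_ Hdich]]]]. destruct (Hdich A); tauto. Qed.

Lemma uf_compl_absurd {A} : p A -> p (fun x => S x /\ ~ A x) -> False.
Proof.
  intros pA pnA. destruct (uf_nonempty (uf_and pA pnA)) as [x [_ [Ax [_ nAx]]]]. auto.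
Qed.

Lemma uf_inter_list l : (forall B, In B l -> p B) -> p (inter l).
Proof.
  induction l as [|B l IH]; intros Hl.
  - apply (uf_mono uf_full). intros x _ _ C [].
  - apply (uf_mono (A := fun x => B x /\ inter l x)).
    + apply uf_and; [apply Hl; left; reflexivity|apply IH; intros; apply Hl; right; auto].
    + intros x _ [Bx Ix] C [<-|HC]; [exact Bx|exact (Ix C HC)].
Qed.

Lemma uf_union_list {T : Type} (l : list T) (C : T -> R -> Prop) :
  p (fun x => exists t, In t l /\ C t x) -> exists t, In t l /\ p (C t).
Proof.
  induction l as [|a l IH]; intros H.
  - destruct (uf_nonempty H) as [x [_ [t [[] _]]]].
  - destruct (classic (p (C a))) as [Ha|Ha]; [exists a; simpl; auto|].
    destruct IH as [t [It Ct]]; [|exists t; simpl; auto].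
    apply (uf_mono (uf_and H (uf_compl Ha))).
    intros x _ [[t [[<-|It] Ct]] [_ nC]]; [contradiction|eauto].
Qed.

Lemma uf_equiv {A B} : (forall z, S z -> (A z <-> B z)) -> (p A <-> p B).
Proof. intros H; split; intro HA; apply (uf_mono HA); intros z Sz; apply H; auto. Qed.

End OneUltrafilter.

Lemma uf_eq {p q} : ultrafilter S p -> ultrafilter S q -> (forall A, p A -> q A) -> p = q.
Proof.
  intros Up Uq H. apply functional_extensionality; intro A; apply propositional_extensionality.
  split; [auto|]. intros qA. apply NNPP; intro N.
  exact (uf_compl_absurd Uq qA (H _ (uf_compl Up N))).
Qed.

Lemma FIP_mono G H : (forall B, G B -> H B) -> FIP S H -> FIP S G.
Proof. intros GH F l Hl. apply F. intros; apply GH, Hl; auto. Qed.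

Lemma FIP_add H C :
  (forall l, (forall B, In B l -> H B) -> exists x, S x /\ C x /\ inter l x) ->
  FIP S (fun B => H B \/ B = C).
Proof.
  intros Hc l Hl.
  assert (E : exists l', (forall B, In B l' -> H B) /\ forall x, C x -> inter l' x -> inter l x).
  { clear Hc. induction l as [|B l IH].
    - exists nil. split; [intros _ []|intros x _ _ B' []].
    - destruct IH as [l' [H1 H2]]; [intros; apply Hl; simpl; auto|].
      destruct (Hl B (or_introl eq_refl)) as [HB| ->].
      + exists (B :: l'). split; [intros B' [<-|I]; auto|].
        intros x Cx Ix B' [<-|I]; [apply Ix; left; reflexivity|].
        apply H2; auto. intros B'' I'; apply Ix; right; exact I'.
      + exists l'. split; auto. intros x Cx Ix B' [<-|I]; [exact Cx|exact (H2 x Cx Ix B' I)]. }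
  destruct E as [l' [H1 H2]]. destruct (Hc l' H1) as [x [Sx [Cx Ix]]]. exists x; auto.
Qed.

Lemma FIP_chain_union (G : (R -> Prop) -> Prop) (F : ((R -> Prop) -> Prop) -> Prop) :
  FIP S G ->
  (forall X, F X -> FIP S (fun B => X B \/ G B)) ->
  (forall X Y, F X -> F Y -> (forall B, X B -> Y B) \/ (forall B, Y B -> X B)) ->
  FIP S (fun B => (exists X, F X /\ X B) \/ G B).
Proof.
  intros FG FP Ftot l Hl.
  assert (E : (exists X, F X /\ forall B, In B l -> X B \/ G B) \/ (forall B, In B l -> G B)).
  { induction l as [|B l IH]; [right; intros _ []|].
    destruct (Hl B (or_introl eq_refl)) as [[Y [FY YB]]|GB];
      (destruct IH as [[X [FX HX]]|HG]; [intros; apply Hl; right; auto| |]).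
    - destruct (Ftot X Y FX FY) as [XY|YX].
      + left. exists Y. split; auto. intros B' [<-|I]; auto. destruct (HX B' I); auto.
      + left. exists X. split; auto. intros B' [<-|I]; auto.
    - left. exists Y. split; auto. intros B' [<-|I]; auto.
    - left. exists X. split; auto. intros B' [<-|I]; auto.
    - right. intros B' [<-|I]; auto. }
  destruct E as [[X [FX HX]]|HG]; [exact (FP X FX l HX)|exact (FG l HG)].
Qed.

Lemma FIP_maximal_ultrafilter p : FIP S p ->
  (forall C, (forall l, (forall B, In B l -> p B) -> exists x, S x /\ C x /\ inter l x) -> p C) ->
  ultrafilter S p.
Proof.
  intros Fp Hmax.
  assert (Hmeet : forall l C, (forall B, In B l -> p B) ->
            (forall x, S x -> inter l x -> C x) -> p C).
  { intros l C Hl HC. apply Hmax. intros l' Hl'.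
    destruct (Fp (l ++ l')) as [x [Sx Ix]].
    { intros B I; apply in_app_or in I; destruct I; auto. }
    exists x. split; [exact Sx|]. split.
    - apply HC; auto. intros B I; apply Ix, in_or_app; auto.
    - intros B I; apply Ix, in_or_app; auto. }
  split; [|split; [|split; [|split]]].
  - apply (Hmeet nil); [intros _ []|auto].
  - intro pF. destruct (Fp (cons (fun _ => False) nil)) as [x [_ Ix]].
    + intros B [<-|[]]; auto.
    + apply (Ix _ (or_introl eq_refl)).
  - intros A B pA pB. apply (Hmeet (A :: B :: nil)).
    + intros B' [<-|[<-|[]]]; auto.
    + intros x _ Ix. split; apply Ix; simpl; auto.
  - intros A B pA AB. apply (Hmeet (A :: nil)).
    + intros B' [<-|[]]; auto.
    + intros x _ Ix. apply AB, Ix; left; reflexivity.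
  - intros C. apply NNPP; intro N. apply not_or_and in N. destruct N as [N1 N2].
    assert (E1 := fun H => N1 (Hmax C H)).
    assert (E2 := fun H => N2 (Hmax (fun x => S x /\ ~ C x) H)).
    apply not_all_ex_not in E1; destruct E1 as [l1 E1].
    apply not_all_ex_not in E2; destruct E2 as [l2 E2].
    apply imply_to_and in E1; destruct E1 as [H1 E1].
    apply imply_to_and in E2; destruct E2 as [H2 E2].
    destruct (Fp (l1 ++ l2)) as [x [Sx Ix]].
    { intros B I; apply in_app_or in I; destruct I; auto. }
    destruct (classic (C x)).
    + apply E1. exists x. repeat split; auto. intros B I; apply Ix, in_or_app; auto.
    + apply E2. exists x. repeat split; auto. intros B I; apply Ix, in_or_app; auto.
Qed.

Lemma ultrafilter_extension G : FIP S G -> exists p, ultrafilter S p /\ forall B, G B -> p B.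
Proof.
  intros FG.
  destruct (zorn_maximal (fun X => FIP S (fun B => X B \/ G B))) as [X [FX Xmax]].
  { intros F FP Ftot. apply FIP_chain_union; auto. }
  exists (fun B => X B \/ G B). split; [|auto].
  apply FIP_maximal_ultrafilter; [exact FX|]. intros C HC. left.
  apply (Xmax (fun B => X B \/ B = C)); auto.
  apply FIP_mono with (H := fun B => (X B \/ G B) \/ B = C); [intros B [[?|?]|?]; auto|].
  apply FIP_add; exact HC.
Qed.

End Ultrafilters.

Definition uset := ((R -> Prop) -> Prop) -> Prop.

Definition closed (S : R -> Prop) (M : uset) : Prop := forall p, beta_closure S M p -> M p.

Definition nonempty_closed (S : R -> Prop) (M : uset) : Prop :=
  (exists q, M q) /\ (forall q, M q -> ultrafilter S q) /\ closed S M.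

Section ClosedSets.

Context {S : R -> Prop}.

Lemma beta_closure_mono {M N : uset} {p} :
  beta_closure S M p -> (forall q, M q -> N q) -> beta_closure S N p.
Proof.
  intros [Up H] MN. split; auto. intros A pA. destruct (H A pA) as [q [Mq qA]]. eauto.
Qed.

Lemma closed_clopen E : closed S (fun q => ultrafilter S q /\ q E).
Proof.
  intros p [Up H]. split; auto. apply NNPP; intro N.
  destruct (H _ (uf_compl Up N)) as [q [[Uq qE] qN]]. exact (uf_compl_absurd Uq qE qN).
Qed.

Lemma closed_meet M (NN : uset -> Prop) : closed S M -> (forall N, NN N -> closed S N) ->
  closed S (fun q => M q /\ forall N, NN N -> N q).
Proof.
  intros HM HN p Hp. split.
  - apply HM, (beta_closure_mono Hp). intros q [Mq _]; auto.
  - intros N NN1. apply HN; [exact NN1|].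
    apply (beta_closure_mono Hp). intros q [_ Hq]; apply Hq; exact NN1.
Qed.

(* Compactness of betaS, in finite-intersection form. *)
Lemma closed_family_meet (NN : uset -> Prop) :
  (forall N, NN N -> closed S N) ->
  (forall l : list uset, (forall N, In N l -> NN N) ->
     exists q, ultrafilter S q /\ forall N, In N l -> N q) ->
  exists q, ultrafilter S q /\ forall N, NN N -> N q.
Proof.
  intros Hcl Hfin.
  set (G := fun D : R -> Prop => exists N, NN N /\ forall q, N q -> ultrafilter S q -> q D).
  assert (FG : FIP S G).
  { intros l Hl.
    assert (E : exists ln, (forall N, In N ln -> NN N) /\
                 forall D, In D l -> exists N, In N ln /\ forall q, N q -> ultrafilter S q -> q D).
    { clear - Hl. induction l as [|D l IH]; [exists nil; split; intros _ []|].
      destruct IH as [ln [H1 H2]]; [intros; apply Hl; right; auto|].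
      destruct (Hl D (or_introl eq_refl)) as [N [NN1 HN]].
      exists (N :: ln). split; [intros N' [<-|I]; auto|].
      intros D' [<-|I]; [exists N; simpl; auto|].
      destruct (H2 D' I) as [N' [I' H']]. exists N'; simpl; auto. }
    destruct E as [ln [H1 H2]]. destruct (Hfin ln H1) as [q [Uq Hq]].
    apply (uf_nonempty Uq), (uf_inter_list Uq).
    intros D ID. destruct (H2 D ID) as [N [IN HN]]. exact (HN q (Hq N IN) Uq). }
  destruct (ultrafilter_extension G FG) as [r [Ur Hr]].
  exists r. split; auto. intros N NN1. apply Hcl; auto. split; auto.
  intros A rA. apply NNPP; intro Nq.
  assert (GA : G (fun x => S x /\ ~ A x)).
  { exists N. split; auto. intros q Nq' Uq. apply (uf_compl Uq). intro qA. apply Nq. eauto. }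
  exact (uf_compl_absurd Ur rA (Hr _ GA)).
Qed.

Lemma chain_list_least (P : uset -> Prop) (d : uset) (l : list uset) :
  P d -> (forall N, In N l -> P N) ->
  (forall X Y, P X -> P Y -> (forall q, X q -> Y q) \/ (forall q, Y q -> X q)) ->
  exists m, P m /\ forall N, In N l -> forall q, m q -> N q.
Proof.
  intros Pd Hl Hch. induction l as [|N l IH]; [exists d; split; [exact Pd|intros _ []]|].
  destruct IH as [m [Pm Hm]]; [intros; apply Hl; right; auto|].
  assert (PN : P N) by (apply Hl; left; reflexivity).
  destruct (Hch m N Pm PN) as [mN|Nm].
  - exists m. split; [exact Pm|]. intros N' [<-|I] q Hq; [exact (mN q Hq)|exact (Hm N' I q Hq)].
  - exists N. split; [exact PN|]. intros N' [<-|I] q Hq; [exact Hq|exact (Hm N' I q (Nm q Hq))].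
Qed.

Lemma chain_meet_nonempty_closed M0 (NN : uset -> Prop) :
  nonempty_closed S M0 ->
  (forall N, NN N -> nonempty_closed S N /\ forall q, N q -> M0 q) ->
  (forall X Y, NN X -> NN Y -> (forall q, X q -> Y q) \/ (forall q, Y q -> X q)) ->
  nonempty_closed S (fun q => M0 q /\ forall N, NN N -> N q).
Proof.
  intros [[q0 Mq0] [MU Mcl]] HNN Hch.
  assert (Psub : forall N, N = M0 \/ NN N -> nonempty_closed S N /\ forall q, N q -> M0 q).
  { intros N [->|HN]; [|auto]. split; [split; [exists q0; exact Mq0|auto]|auto]. }
  split; [|split].
  - destruct (closed_family_meet (fun N => N = M0 \/ NN N)) as [q [Uq Hq]].
    + intros N HN. apply Psub; auto.
    + intros l Hl.
      destruct (chain_list_least (fun N => N = M0 \/ NN N) M0 l) as [m [Pm Hm]]; auto.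
      { intros X Y PX PY.
        destruct PX as [->|PX]; [right; apply Psub; auto|].
        destruct PY as [->|PY]; [left; apply HNN; auto|auto]. }
      destruct (Psub m Pm) as [[[q mq] [mU _]] _].
      exists q. split; [exact (mU q mq)|]. intros N I; exact (Hm N I q mq).
    + exists q. split; [apply Hq; auto|]. intros N HN; apply Hq; auto.
  - intros q [Mq _]; auto.
  - apply closed_meet; auto. intros N HN. apply HNN; auto.
Qed.

(* Zorn applied to the complements: a maximal complement is a minimal set. *)
Lemma minimal_nonempty_closed (Phi : uset -> Prop) M0 :
  nonempty_closed S M0 -> Phi M0 ->
  (forall NN : uset -> Prop,
     (forall N, NN N -> nonempty_closed S N /\ Phi N /\ (forall q, N q -> M0 q)) ->
     (forall X Y, NN X -> NN Y -> (forall q, X q -> Y q) \/ (forall q, Y q -> X q)) ->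
     Phi (fun q => M0 q /\ forall N, NN N -> N q)) ->
  exists N, nonempty_closed S N /\ Phi N /\ (forall q, N q -> M0 q) /\
    forall N', nonempty_closed S N' -> Phi N' -> (forall q, N' q -> N q) -> forall q, N q -> N' q.
Proof.
  intros G0 P0 HPhi.
  set (NC := fun (C : uset) q => M0 q /\ ~ C q).
  destruct (zorn_maximal (fun C => nonempty_closed S (NC C) /\ Phi (NC C))) as [C [[GC PC] Cmax]].
  - intros F FP Ftot.
    set (NN := fun N => exists C, F C /\ N = NC C).
    replace (NC (fun x => exists X, F X /\ X x)) with (fun q => M0 q /\ forall N, NN N -> N q).
    2: { apply functional_extensionality; intro q; apply propositional_extensionality.
         unfold NC, NN. split.
         - intros [M0q H]. split; auto. intros [X [FX Xq]]. destruct (H (NC X)) as [_ nX]; eauto.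
         - intros [M0q nC]. split; auto. intros N [C [FC ->]].
           split; auto. intro Cq; apply nC; eauto. }
    assert (HNN : forall N, NN N -> nonempty_closed S N /\ Phi N /\ (forall q, N q -> M0 q)).
    { intros N [C [FC ->]]. destruct (FP C FC). split; [auto|split; [auto|intros q [? _]; auto]]. }
    assert (ch : forall X Y, NN X -> NN Y -> (forall q, X q -> Y q) \/ (forall q, Y q -> X q)).
    { intros X Y [C1 [F1 ->]] [C2 [F2 ->]].
      destruct (Ftot C1 C2 F1 F2) as [H|H]; [right|left]; intros q [m n]; split; auto. }
    split; [|apply HPhi; auto].
    apply chain_meet_nonempty_closed; auto. intros N HN; apply HNN in HN; tauto.
  - exists (NC C). split; [auto|split; [auto|split; [intros q [? _]; auto|]]].
    intros N' GN' PN' sub q NCq.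
    assert (E : NC (fun q => ~ N' q) = N').
    { apply functional_extensionality; intro w; apply propositional_extensionality. unfold NC.
      split; [intros [_ H]; apply NNPP; auto|].
      intros H. split; [destruct (sub w H); auto|tauto]. }
    apply NNPP; intro nN'.
    apply (Cmax (fun q => ~ N' q)) in nN'; [destruct NCq; contradiction|rewrite E; auto|].
    intros w Cw nN''. apply (sub w) in nN''. destruct nN''; contradiction.
Qed.

End ClosedSets.

Lemma dense_subsemigroup_add {S} : dense_subsemigroup S -> forall x y, S x -> S y -> S (x + y).
Proof. intros [_ [H _]]; exact H. Qed.

Lemma dense_subsemigroup_pos {S} : dense_subsemigroup S -> forall x, S x -> 0 < x.
Proof. intros [H _]; exact H. Qed.

Lemma dense_subsemigroup_near0 {S} : dense_subsemigroup S ->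
  forall d, 0 < d -> exists s, S s /\ 0 < s /\ s < d.
Proof.
  intros [_ [_ Hd]] d d0. destruct (Hd (d/2) d) as [s [Ss [s1 s2]]]; try lra.
  exists s. repeat split; auto; lra.
Qed.

Lemma is_sum_eq {S r p q} : is_sum S r p q -> r = bplus S p q.
Proof.
  intros H. apply functional_extensionality; intro A; apply propositional_extensionality; apply H.
Qed.

Section Semigroup.

Context {S : R -> Prop} (HS : dense_subsemigroup S).

Lemma bplus_ultrafilter p q : ultrafilter S p -> ultrafilter S q -> ultrafilter S (bplus S p q).
Proof.
  intros Up Uq. unfold bplus. assert (Hadd := dense_subsemigroup_add HS).
  split; [|split; [|split; [|split]]].
  - apply (uf_mono Up (uf_full Up)). intros x Sx _. split; auto.
    apply (uf_mono Uq (uf_full Uq)). intros y Sy _. split; auto.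
  - intro H. destruct (uf_nonempty Up H) as [x [_ [_ Hq]]].
    destruct (uf_nonempty Uq Hq) as [y [_ [_ Hf]]]; exact Hf.
  - intros A B HA HB. apply (uf_mono Up (uf_and Up HA HB)).
    intros x Sx [[_ qA] [_ qB]]. split; auto.
    apply (uf_mono Uq (uf_and Uq qA qB)). intros y Sy [[_ Ay] [_ By]]. repeat split; auto.
  - intros A B HA AB. apply (uf_mono Up HA).
    intros x Sx [_ qA]. split; auto. apply (uf_mono Uq qA). intros y Sy [_ Ay]. split; auto.
  - intros A. destruct (classic (p (fun x => S x /\ q (shiftset S x A)))) as [H|H]; [left; exact H|right].
    apply (uf_mono Up (uf_compl Up H)). intros x Sx [_ N]. split; auto.
    assert (N' : ~ q (shiftset S x A)) by tauto.
    apply (uf_mono Uq (uf_compl Uq N')). intros y Sy [_ N2].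
    split; auto. split; [auto|]. intro Ay. apply N2. split; auto.
Qed.

Lemma bplus_assoc p q r : ultrafilter S p -> ultrafilter S q -> ultrafilter S r ->
  bplus S p (bplus S q r) = bplus S (bplus S p q) r.
Proof.
  intros Up Uq Ur. assert (Hadd := dense_subsemigroup_add HS).
  apply functional_extensionality; intro A; apply propositional_extensionality.
  apply (uf_equiv Up). intros x Sx.
  split; intros [_ H]; split; auto.
  - apply (uf_mono Uq H). intros y Sy [_ H2]. split; auto. split; [auto|].
    apply (uf_mono Ur H2). intros z Sz [_ [_ H3]]. split; auto. rewrite Rplus_assoc; auto.
  - apply (uf_mono Uq H). intros y Sy [_ [_ H2]]. split; auto.
    apply (uf_mono Ur H2). intros z Sz [_ H3]. split; auto. split; [auto|].
    rewrite <- Rplus_assoc; auto.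
Qed.

(* Right translation [u |-> u + z] is continuous, so it maps closed sets to closed sets. *)
Lemma closed_right_translate M z : nonempty_closed S M -> ultrafilter S z ->
  closed S (fun w => exists u, M u /\ w = bplus S u z).
Proof.
  intros [_ [MU Mcl]] Uz r [Ur Hr].
  set (pull := fun D : R -> Prop => fun s => S s /\ z (shiftset S s D)).
  destruct (closed_family_meet (S := S) (fun N => N = M \/ exists D, r D /\
              N = (fun q => ultrafilter S q /\ q (pull D)))) as [q [Uq Hq]].
  - intros N [->|[D [_ ->]]]; [exact Mcl|apply closed_clopen].
  - intros l Hl.
    assert (E : exists Ds, r Ds /\ forall N, In N l -> N = M \/
               forall q, ultrafilter S q -> q (pull Ds) -> N q).
    { clear - Hl Ur Uz. induction l as [|N l IH]; [exists S; split; [apply (uf_full Ur)|intros _ []]|].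
      destruct IH as [Ds [rD HD]]; [intros; apply Hl; right; auto|].
      destruct (Hl N (or_introl eq_refl)) as [->|[D [rD' ->]]].
      + exists Ds. split; auto. intros N' [<-|I]; auto.
      + exists (fun x => Ds x /\ D x). split; [apply (uf_and Ur); auto|].
        intros N' [<-|I].
        * right. intros q Uq Hq. split; auto. apply (uf_mono Uq Hq).
          intros s Ss [_ H]. split; auto. apply (uf_mono Uz H). intros y Sy [_ [_ Dy]]. split; auto.
        * destruct (HD N' I) as [E|H]; auto. right. intros q Uq Hq. apply H; auto.
          apply (uf_mono Uq Hq).
          intros s Ss [_ H']. split; auto. apply (uf_mono Uz H'). intros y Sy [_ [Dy _]]. split; auto. }
    destruct E as [Ds [rD HD]].
    destruct (Hr Ds rD) as [w [[u [Mu ->]] Hw]].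
    exists u. split; [apply MU; auto|].
    intros N I. destruct (HD N I) as [->|H]; auto.
  - exists q. split; [apply Hq; left; auto|].
    apply (uf_eq Ur (bplus_ultrafilter q z Uq Uz)).
    intros D rD. apply (Hq (fun q => ultrafilter S q /\ q (pull D))). right. exists D. auto.
Qed.

(* Ellis: a minimal closed subsemigroup [N] satisfies [N + p = N] and then
   [{u in N | u + p = p} = N], so [p + p = p]. *)
Lemma ellis_idempotent M : nonempty_closed S M ->
  (forall p q, M p -> M q -> M (bplus S p q)) -> exists p, M p /\ bplus S p p = p.
Proof.
  intros GM HM.
  destruct (minimal_nonempty_closed (fun N => forall p q, N p -> N q -> N (bplus S p q)) M GM HM)
    as [N [[[p Np] [NU Ncl]] [PN [NM Nmin]]]].
  { intros NN HNN ch p q [Mp Hp] [Mq Hq]. split; auto. intros N HN.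
    destruct (HNN N HN) as [_ [PN _]]. apply PN; [apply Hp|apply Hq]; exact HN. }
  exists p. split; auto.
  assert (Up := NU p Np).
  assert (Np_absorbs : exists u, N u /\ p = bplus S u p).
  { set (N1 := fun w => exists u, N u /\ w = bplus S u p).
    apply (Nmin N1); [| |intros w [u [Nu ->]]; apply PN; auto|exact Np].
    - split; [exists (bplus S p p); exists p; auto|split].
      + intros w [u [Nu ->]]. apply bplus_ultrafilter; auto.
      + apply closed_right_translate; auto. split; [exists p; auto|split; auto].
    - intros a b [u1 [N1' ->]] [u2 [N2' ->]].
      exists (bplus S (bplus S u1 p) u2). split; [apply PN; auto|].
      rewrite bplus_assoc; auto; apply bplus_ultrafilter; auto. }
  destruct Np_absorbs as [u0 [Nu0 Eu0]].
  set (N2 := fun u => N u /\ bplus S u p = p).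
  apply (Nmin N2); [| |intros q [? _]; auto|exact Np].
  - split; [exists u0; split; auto|split; [intros q [Nq _]; auto|]].
    intros r Hr.
    assert (Nr : N r) by (apply Ncl, (beta_closure_mono Hr); intros q [Nq _]; auto).
    split; auto. destruct Hr as [Ur Hr].
    symmetry. apply (uf_eq Up (bplus_ultrafilter r p Ur Up)).
    intros D pD. apply NNPP; intro nD.
    destruct (Hr _ (uf_compl Ur nD)) as [q [[Nq Eq] qD]].
    rewrite <- Eq in pD. exact (uf_compl_absurd (NU q Nq) pD qD).
  - intros a b [Na Ea] [Nb Eb]. split; [apply PN; auto|].
    rewrite <- bplus_assoc; auto. rewrite Eb. exact Ea.
Qed.

End Semigroup.

(* [q] lies in a minimal left ideal of [O^+(S)]: [q] is in [O^+(S) + r + q] for every [r]. *)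
Definition left_minimal (S : R -> Prop) (q : (R -> Prop) -> Prop) : Prop :=
  forall r, Oplus S r -> exists u, Oplus S u /\ q = bplus S u (bplus S r q).

Lemma Oplus_exists_in (S : R -> Prop) C : (forall d, 0 < d -> exists x, S x /\ 0 < x /\ x < d /\ C x) ->
  exists r, Oplus S r /\ r C.
Proof.
  intros H.
  set (G := fun B : R -> Prop => B = C \/ exists e, 0 < e /\ B = (fun x => S x /\ 0 < x /\ x < e)).
  assert (FG : FIP S G).
  { intros l Hl.
    assert (E : exists e, 0 < e /\ forall x, S x -> 0 < x -> x < e -> C x -> inter l x).
    { clear H. induction l as [|B l IH]; [exists 1; split; [lra|intros x _ _ _ _ B []]|].
      destruct IH as [e [e0 He]]; [intros; apply Hl; right; auto|].
      destruct (Hl B (or_introl eq_refl)) as [EB|[e' [e'0 EB]]].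
      + exists e. split; auto. intros x Sx x0 xe Cx B' [<-|I'].
        * rewrite EB. exact Cx.
        * exact (He x Sx x0 xe Cx B' I').
      + exists (Rmin e e'). split; [apply Rmin_pos; auto|].
        assert (Rmin e e' <= e) by apply Rmin_l. assert (Rmin e e' <= e') by apply Rmin_r.
        intros x Sx x0 xe Cx B' [<-|I'].
        * rewrite EB. repeat split; auto; lra.
        * apply (He x Sx x0); auto; lra. }
    destruct E as [e [e0 He]]. destruct (H e e0) as [x [Sx [x0 [xe Cx]]]].
    exists x. split; auto. }
  destruct (ultrafilter_extension G FG) as [r [Ur Hr]].
  exists r. split; [split; auto|apply Hr; left; auto].
  intros eps He. apply Hr. right. exists eps. auto.
Qed.

Section SmallestIdeal.

Context {S : R -> Prop} (HS : dense_subsemigroup S).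

Lemma Oplus_ultrafilter {p} : Oplus S p -> ultrafilter S p.
Proof. intros [H _]; exact H. Qed.

Lemma Oplus_bplus p q : Oplus S p -> Oplus S q -> Oplus S (bplus S p q).
Proof.
  intros [Up Hp] [Uq Hq]. split; [apply bplus_ultrafilter; auto|].
  intros eps He. apply (uf_mono Up (Hp (eps/2) ltac:(lra))).
  intros x Sx [_ [x0 xe]]. split; auto.
  apply (uf_mono Uq (Hq (eps/2) ltac:(lra))).
  intros y Sy [_ [y0 ye]]. split; auto. split; [apply (dense_subsemigroup_add HS); auto|lra].
Qed.

Lemma Oplus_closed : closed S (Oplus S).
Proof.
  intros p [Up H]. split; auto. intros eps He. apply NNPP; intro N.
  destruct (H _ (uf_compl Up N)) as [q [[Uq Hq] qN]].
  exact (uf_compl_absurd Uq (Hq eps He) qN).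
Qed.

Lemma Oplus_nonempty_closed : nonempty_closed S (Oplus S).
Proof.
  split; [|split; [intros q [U _]; auto|apply Oplus_closed]].
  destruct (Oplus_exists_in S S) as [r [Hr _]]; [|exists r; auto].
  intros d d0. destruct (dense_subsemigroup_near0 HS d d0) as [s [Ss ?]]. exists s. tauto.
Qed.

Lemma left_minimal_exists : exists q, Oplus S q /\ left_minimal S q.
Proof.
  destruct (minimal_nonempty_closed (S := S) (fun N => forall p q, Oplus S p -> N q -> N (bplus S p q))
              (Oplus S)) as [N [[[q Nq] [NU Ncl]] [PN [NM Nmin]]]].
  - apply Oplus_nonempty_closed.
  - apply Oplus_bplus.
  - intros NN HNN ch p q Op [Mq Hq]. split; [apply Oplus_bplus; auto|]. intros N HN.
    destruct (HNN N HN) as [_ [PN _]]. apply PN; [exact Op|apply Hq; exact HN].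
  - exists q. split; [auto|]. intros r Or.
    set (L := fun w => exists u, Oplus S u /\ w = bplus S u (bplus S r q)).
    assert (Urq : ultrafilter S (bplus S r q))
      by (apply bplus_ultrafilter; auto; apply Oplus_ultrafilter; auto).
    apply (Nmin L); [| |intros w [u [Ou ->]]; apply PN; auto|exact Nq].
    + split; [exists (bplus S r (bplus S r q)); exists r; auto|split].
      * intros w [u [Ou ->]]. apply bplus_ultrafilter; auto. apply Oplus_ultrafilter; auto.
      * apply closed_right_translate; auto. apply Oplus_nonempty_closed.
    + intros p w Op [u [Ou ->]]. exists (bplus S p u). split; [apply Oplus_bplus; auto|].
      rewrite bplus_assoc; auto; apply Oplus_ultrafilter; auto.
Qed.

Lemma left_minimal_ideal : two_sided_ideal_Oplus S (fun q => Oplus S q /\ left_minimal S q).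
Proof.
  split; [|split; [|split]].
  - apply left_minimal_exists.
  - intros q [? _]; auto.
  - intros p q r Op [Oq Mq] E. apply is_sum_eq in E. subst r. split; [apply Oplus_bplus; auto|].
    intros r Or. destruct (Mq (bplus S r p)) as [u [Ou Eu]]; [apply Oplus_bplus; auto|].
    exists (bplus S p u). split; [apply Oplus_bplus; auto|].
    assert (Ur := Oplus_ultrafilter Or). assert (Up := Oplus_ultrafilter Op).
    assert (Uq := Oplus_ultrafilter Oq). assert (Uu := Oplus_ultrafilter Ou).
    rewrite Eu at 1. rewrite <- !bplus_assoc; auto; repeat apply bplus_ultrafilter; auto.
  - intros p q r Op [Oq Mq] E. apply is_sum_eq in E. subst r. split; [apply Oplus_bplus; auto|].
    intros r Or. destruct (Mq r Or) as [u [Ou Eu]].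
    exists u. split; [auto|].
    assert (Ur := Oplus_ultrafilter Or). assert (Up := Oplus_ultrafilter Op).
    assert (Uq := Oplus_ultrafilter Oq). assert (Uu := Oplus_ultrafilter Ou).
    rewrite Eu at 1. rewrite <- !bplus_assoc; auto; repeat apply bplus_ultrafilter; auto.
Qed.

Lemma K_Oplus_iff q : K_Oplus S q <-> Oplus S q /\ left_minimal S q.
Proof.
  split; [intros HK; apply HK, left_minimal_ideal|].
  intros [Oq Mq] I [[i Ii] [IO [IL IR]]].
  destruct (Mq i (IO i Ii)) as [u [Ou Eu]].
  apply (IL u (bplus S i q) q Ou).
  - apply (IR q i (bplus S i q) Oq Ii). intro A; tauto.
  - rewrite Eu at 1. intro A; tauto.
Qed.

Lemma K_Oplus_Oplus {q} : K_Oplus S q -> Oplus S q.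
Proof. intros Kq. exact (proj1 (proj1 (K_Oplus_iff q) Kq)). Qed.

Lemma K_Oplus_ultrafilter {q} : K_Oplus S q -> ultrafilter S q.
Proof. intros Kq. exact (Oplus_ultrafilter (K_Oplus_Oplus Kq)). Qed.

Lemma K_Oplus_exists : exists q, K_Oplus S q.
Proof. destruct left_minimal_exists as [q Hq]. exists q. apply K_Oplus_iff; auto. Qed.

Lemma K_Oplus_bplus_r q p : K_Oplus S q -> Oplus S p -> K_Oplus S (bplus S q p).
Proof.
  intros Kq Op. apply K_Oplus_iff. destruct left_minimal_ideal as [_ [_ [_ IR]]].
  apply (IR p q); [auto|apply K_Oplus_iff; auto|intro; tauto].
Qed.

Lemma K_Oplus_bplus_l q p : K_Oplus S q -> Oplus S p -> K_Oplus S (bplus S p q).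
Proof.
  intros Kq Op. apply K_Oplus_iff. destruct left_minimal_ideal as [_ [_ [IL _]]].
  apply (IL p q); [auto|apply K_Oplus_iff; auto|intro; tauto].
Qed.

End SmallestIdeal.

Lemma archimedean_inv d : 0 < d -> exists n, (1 <= n)%nat /\ 1 / INR n < d.
Proof.
  intros Hd. destruct (archimed_cor1 d Hd) as [n [H1 H2]]. exists n. split; [lia|].
  unfold Rdiv; rewrite Rmult_1_l; exact H1.
Qed.

Lemma inv_INR_le (n m : nat) : (1 <= m)%nat -> (m <= n)%nat -> 1 / INR n <= 1 / INR m.
Proof.
  intros H1 H2. unfold Rdiv; rewrite !Rmult_1_l. apply Rinv_le_contravar.
  - apply lt_0_INR; lia.
  - apply le_INR; lia.
Qed.

Lemma inv_INR_pos (n : nat) : (1 <= n)%nat -> 0 < 1 / INR n.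
Proof.
  intros H. unfold Rdiv; rewrite Rmult_1_l. apply Rinv_0_lt_compat, lt_0_INR; lia.
Qed.

Lemma uf_forall_le {S q} (Z : nat -> R -> Prop) m : ultrafilter S q -> (forall n, q (Z n)) ->
  q (fun x => forall n, (n <= m)%nat -> Z n x).
Proof.
  intros Uq HZ. induction m as [|m IH].
  - apply (uf_mono Uq (HZ 0%nat)). intros x _ Hx n Hn. replace n with 0%nat by lia. exact Hx.
  - apply (uf_mono Uq (uf_and Uq IH (HZ (Datatypes.S m)))).
    intros x _ [H1 H2] n Hn. destruct (Nat.eq_dec n (Datatypes.S m)) as [->|ne]; auto.
    apply H1; lia.
Qed.

Lemma uf_forall_below_threshold {S q} (delta : nat -> R) (Z : nat -> R -> Prop) g :
  ultrafilter S q -> 0 < g -> (forall n, (1 <= n)%nat -> delta n < 1 / INR n) ->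
  (forall n, (1 <= n)%nat -> g < delta n -> q (Z n)) ->
  q (fun x => forall n, (1 <= n)%nat -> g < delta n -> Z n x).
Proof.
  intros Uq g0 Hdelta HZ. destruct (archimedean_inv g g0) as [N [N1 Ng]].
  set (Z' := fun n x => (1 <= n)%nat -> g < delta n -> Z n x).
  assert (HZ' : forall n, q (Z' n)).
  { intros n. destruct (classic ((1 <= n)%nat /\ g < delta n)) as [[n1 gd]|nn].
    - apply (uf_mono Uq (HZ n n1 gd)). intros x _ Hx _ _. exact Hx.
    - apply (uf_mono Uq (uf_full Uq)). intros x _ _ n1 gd. tauto. }
  apply (uf_mono Uq (uf_forall_le Z' N Uq HZ')).
  intros x _ H n n1 gd. apply (H n); auto.
  destruct (Compare_dec.le_lt_dec n N) as [l|l]; [exact l|].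
  assert (Hi := inv_INR_le n N N1 ltac:(lia)). assert (Hn := Hdelta n n1). lra.
Qed.

Definition union_shifts (S : R -> Prop) (Fn : list R) (B : R -> Prop) : R -> Prop :=
  fun y => S y /\ exists t, In t Fn /\ shiftset S t B y.

Section PiecewiseSyndetic.

Context {S : R -> Prop} (HS : dense_subsemigroup S).

Lemma piecewise_syndetic_Oplus_point B F delta :
  (forall G mu, G <> nil -> (forall g, In g G -> S g) -> 0 < mu ->
     exists x, S x /\ 0 < x /\ x < mu /\
       forall n, (1 <= n)%nat -> forall g, In g G -> 0 < g -> g < delta n ->
         exists t, In t (F n) /\ shiftset S t B (g + x)) ->
  exists p, Oplus S p /\ forall n g, (1 <= n)%nat -> S g -> 0 < g -> g < delta n ->
    p (shiftset S g (union_shifts S (F n) B)).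
Proof.
  intros HG.
  set (G' := fun D : R -> Prop =>
         (exists n g, (1 <= n)%nat /\ S g /\ 0 < g /\ g < delta n /\
            D = shiftset S g (union_shifts S (F n) B)) \/
         (exists e, 0 < e /\ D = (fun x => S x /\ 0 < x /\ x < e))).
  assert (FG : FIP S G').
  { intros l Hl.
    assert (E : exists gl mu, 0 < mu /\ (forall g, In g gl -> S g) /\
              forall x, S x -> 0 < x -> x < mu ->
                (forall n, (1 <= n)%nat -> forall g, In g gl -> 0 < g -> g < delta n ->
                   exists t, In t (F n) /\ shiftset S t B (g + x)) -> inter l x).
    { clear HG. induction l as [|D l IH].
      { exists nil, 1. split; [lra|split; [intros _ []|intros x _ _ _ _ D []]]. }
      destruct IH as [gl [mu [mu0 [Hgl H]]]]; [intros D' I'; apply Hl; right; exact I'|].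
      destruct (Hl D (or_introl eq_refl)) as [[n [g [n1 [Sg [g0 [gd ED]]]]]]|[e [e0 ED]]].
      - exists (g :: gl), mu. split; [auto|split; [intros g' [<-|I]; auto|]].
        intros x Sx x0 xm Hx D' [<-|I'].
        + rewrite ED. split; [auto|split; [apply (dense_subsemigroup_add HS); auto|]].
          exact (Hx n n1 g (or_introl eq_refl) g0 gd).
        + apply (H x Sx x0 xm); auto. intros n' n1' g' Ig'. apply Hx; auto. right; auto.
      - exists gl, (Rmin mu e). split; [apply Rmin_pos; auto|split; [auto|]].
        assert (Rmin mu e <= mu) by apply Rmin_l. assert (Rmin mu e <= e) by apply Rmin_r.
        intros x Sx x0 xm Hx D' [<-|I'].
        + rewrite ED. repeat split; auto; lra.
        + apply (H x Sx x0); auto; lra. }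
    destruct E as [gl [mu [mu0 [Hgl H]]]].
    destruct (dense_subsemigroup_near0 HS 1) as [s0 [Ss0 _]]; [lra|].
    destruct (HG (s0 :: gl) mu) as [x [Sx [x0 [xm Hx]]]]; [discriminate|intros g [<-|I]; auto|auto|].
    exists x. split; auto. apply (H x Sx x0 xm). intros n n1 g Ig. apply Hx; auto. right; auto. }
  destruct (ultrafilter_extension G' FG) as [p [Up Hp]].
  exists p. split.
  - split; auto. intros eps He. apply Hp. right. exists eps. auto.
  - intros n g n1 Sg g0 gd. apply Hp. left. exists n, g. auto.
Qed.

(* With [p] as above and [r] in [K]: [w = r + p] is in [K] and contains every
   [union_shifts (F n) B]; a point [v] of [O^+] concentrating on the [t] in [F n]
   with [-t + B] in [w] then gives [B] in [v + w], which is in [K]. *)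
Lemma piecewise_syndetic_K_Oplus B :
  piecewise_syndetic_near_zero S B -> exists q, K_Oplus S q /\ q B.
Proof.
  intros [F [delta [HF HG]]].
  destruct (piecewise_syndetic_Oplus_point B F delta HG) as [p [Op Hp]].
  destruct (K_Oplus_exists HS) as [r0 Kr0].
  assert (Or0 := K_Oplus_Oplus HS Kr0).
  set (w := bplus S r0 p).
  assert (Kw : K_Oplus S w) by (apply K_Oplus_bplus_r; auto).
  assert (Uw := K_Oplus_ultrafilter HS Kw).
  assert (wB : forall n, (1 <= n)%nat -> w (union_shifts S (F n) B)).
  { intros n n1. destruct (HF n n1) as [_ [_ [d0 _]]]. destruct Or0 as [Ur0 Hr0].
    apply (uf_mono Ur0 (Hr0 (delta n) d0)).
    intros s Ss [_ [s0 sd]]. split; auto. }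
  set (T := fun t => S t /\ exists n, (1 <= n)%nat /\ In t (F n) /\ w (shiftset S t B)).
  destruct (Oplus_exists_in S T) as [v [Ov vT]].
  { intros d d0. destruct (archimedean_inv d d0) as [n [n1 nd]].
    assert (H' : w (fun y => exists t, In t (F n) /\ shiftset S t B y)).
    { apply (uf_mono Uw (wB n n1)). intros y _ [_ Hy]. exact Hy. }
    destruct (uf_union_list Uw (F n) (fun t => shiftset S t B) H') as [t [It wt]].
    destruct (HF n n1) as [_ [Ht _]]. destruct (Ht t It) as [St [t0 t1]].
    exists t. repeat split; auto; [lra|]. exists n. auto. }
  exists (bplus S v w). split; [apply K_Oplus_bplus_l; auto|].
  apply (uf_mono (Oplus_ultrafilter Ov) vT).
  intros s Ss [_ [n [_ [_ Hs]]]]. split; auto.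
Qed.

Lemma K_Oplus_shift_near0 q B r d : K_Oplus S q -> q B -> Oplus S r -> 0 < d ->
  exists t, S t /\ 0 < t /\ t < d /\ bplus S r q (shiftset S t B).
Proof.
  intros Kq qB Or d0. destruct (proj1 (K_Oplus_iff HS q) Kq) as [_ Mq].
  destruct (Mq r Or) as [u [[Uu Hu] Eu]].
  rewrite Eu in qB.
  destruct (uf_nonempty Uu (uf_and Uu qB (Hu d d0))) as [t [St [[_ H] [_ [t0 t1]]]]].
  exists t. auto.
Qed.

(* Compactness of [O^+ + q] turns the pointwise choice of [t] into a finite one. *)
Lemma K_Oplus_finite_cover q B n : K_Oplus S q -> q B -> (1 <= n)%nat ->
  exists Fn, Fn <> nil /\ (forall t, In t Fn -> S t /\ 0 < t /\ t < 1 / INR n) /\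
    forall r, Oplus S r -> exists t, In t Fn /\ bplus S r q (shiftset S t B).
Proof.
  intros Kq qB n1. assert (Uq := K_Oplus_ultrafilter HS Kq). assert (n0 := inv_INR_pos n n1).
  apply NNPP; intro H.
  destruct (dense_subsemigroup_near0 HS (1 / INR n) n0) as [t0 [St0 [t00 t01]]].
  set (Lset := fun w => exists r, Oplus S r /\ w = bplus S r q).
  set (avoid := fun t w => ultrafilter S w /\ w (fun y => S y /\ ~ shiftset S t B y)).
  destruct (closed_family_meet (S := S) (fun N => N = Lset \/
              exists t, S t /\ 0 < t /\ t < 1 / INR n /\ N = avoid t)) as [w [Uw Hw]].
  - intros N [->|[t [_ [_ [_ ->]]]]]; [|apply closed_clopen].
    apply closed_right_translate; auto. apply Oplus_nonempty_closed; auto.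
  - intros l Hl.
    assert (E : exists tl, (forall t, In t tl -> S t /\ 0 < t /\ t < 1 / INR n) /\
               forall N, In N l -> forall w, Lset w -> ultrafilter S w ->
                 (forall t, In t tl -> ~ w (shiftset S t B)) -> N w).
    { clear - Hl. induction l as [|N l IH]; [exists nil; split; intros _ []|].
      destruct IH as [tl [H1 H2]]; [intros N' I'; apply Hl; right; exact I'|].
      destruct (Hl N (or_introl eq_refl)) as [EN|[t [St [t0 [t1 EN]]]]].
      - exists tl. split; auto. intros N' [<-|I'] w Lw Uw Hw; [rewrite EN; exact Lw|exact (H2 N' I' w Lw Uw Hw)].
      - exists (t :: tl). split; [intros t' [<-|I]; auto|].
        intros N' [<-|I'] w Lw Uw Hw.
        + rewrite EN. split; auto. apply (uf_compl Uw). apply Hw. left; auto.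
        + apply H2; auto. intros t' I''. apply Hw. right; auto. }
    destruct E as [tl [H1 H2]].
    assert (nc : ~ forall r, Oplus S r -> exists t, In t (t0 :: tl) /\ bplus S r q (shiftset S t B)).
    { intro Hc. apply H. exists (t0 :: tl). split; [discriminate|split; auto].
      intros t [<-|I]; auto. }
    apply not_all_ex_not in nc. destruct nc as [r nc]. apply imply_to_and in nc.
    destruct nc as [Or nc].
    assert (Urq : ultrafilter S (bplus S r q))
      by (apply bplus_ultrafilter; auto; apply Oplus_ultrafilter; auto).
    exists (bplus S r q). split; auto.
    intros N I. apply (H2 N I); [exists r; auto|auto|].
    intros t It wt. apply nc. exists t. split; auto. right; auto.
  - destruct (Hw Lset (or_introl eq_refl)) as [r [Or ->]].
    destruct (K_Oplus_shift_near0 q B r (1 / INR n) Kq qB Or n0) as [t [St [t0' [t1' Ht]]]].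
    destruct (Hw (avoid t)) as [_ Hb]; [right; exists t; auto|].
    exact (uf_compl_absurd Uw Ht Hb).
Qed.

Lemma Oplus_shift_uniform q C e : ultrafilter S q -> 0 < e ->
  (forall r, Oplus S r -> bplus S r q C) ->
  exists d, 0 < d /\ d < e /\ forall s, S s -> 0 < s -> s < d -> q (shiftset S s C).
Proof.
  intros Uq e0 HC. apply NNPP; intro H.
  destruct (Oplus_exists_in S (fun s => S s /\ ~ q (shiftset S s C))) as [r [Or rC]].
  - intros d d0. set (d' := Rmin d (e / 2)).
    assert (d' <= d) by apply Rmin_l. assert (d' <= e / 2) by apply Rmin_r.
    assert (d'0 : 0 < d') by (apply Rmin_pos; lra).
    apply NNPP; intro H'. apply H. exists d'. split; [auto|split; [lra|]].
    intros s Ss s0 sd. apply NNPP; intro nq. apply H'. exists s. repeat split; auto. lra.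
  - assert (Ur := Oplus_ultrafilter Or).
    apply (uf_compl_absurd Ur (HC r Or)).
    apply (uf_mono Ur rC). intros s Ss [_ ns]. split; auto. tauto.
Qed.

Lemma K_Oplus_piecewise_syndetic q B : K_Oplus S q -> q B -> piecewise_syndetic_near_zero S B.
Proof.
  intros Kq qB. assert (Oq := K_Oplus_Oplus HS Kq). assert (Uq := Oplus_ultrafilter Oq).
  assert (H1 : forall n, exists Fn, (1 <= n)%nat -> Fn <> nil /\
     (forall t, In t Fn -> S t /\ 0 < t /\ t < 1 / INR n) /\
     forall r, Oplus S r -> bplus S r q (union_shifts S Fn B)).
  { intros n. destruct (Compare_dec.le_lt_dec 1 n) as [n1|n0]; [|exists nil; intros; lia].
    destruct (K_Oplus_finite_cover q B n Kq qB n1) as [Fn [Fne [FnS Fcov]]].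
    exists Fn. intros _. split; [auto|split; [auto|]].
    intros r Or. destruct (Fcov r Or) as [t [It Ht]].
    apply (uf_mono (bplus_ultrafilter HS r q (Oplus_ultrafilter Or) Uq) Ht).
    intros y Sy Hy. split; auto. exists t; auto. }
  apply choice in H1. destruct H1 as [F HF].
  assert (H2 : forall n, exists d, (1 <= n)%nat -> 0 < d /\ d < 1 / INR n /\
                 forall s, S s -> 0 < s -> s < d -> q (shiftset S s (union_shifts S (F n) B))).
  { intros n. destruct (Compare_dec.le_lt_dec 1 n) as [n1|n0]; [|exists 0; intros; lia].
    destruct (Oplus_shift_uniform q (union_shifts S (F n) B) (1 / INR n) Uq (inv_INR_pos n n1))
      as [d Hd]; [apply (HF n n1)|exists d; auto]. }
  apply choice in H2. destruct H2 as [delta Hd].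
  exists F, delta. split.
  { intros n n1. destruct (HF n n1) as [A1 [A2 _]]. destruct (Hd n n1) as [D1 [D2 _]]. auto. }
  intros G mu _ GS mu0.
  set (Y := fun g x => forall n, (1 <= n)%nat -> g < delta n ->
                          shiftset S g (union_shifts S (F n) B) x).
  assert (YG : q (fun x => forall g, In g G -> Y g x)).
  { assert (HYG : forall D, In D (map Y G) -> q D).
    { intros D ID. apply in_map_iff in ID. destruct ID as [g [<- Ig]].
      assert (g0 := dense_subsemigroup_pos HS g (GS g Ig)).
      apply (uf_forall_below_threshold delta _ g Uq); auto.
      - intros n n1. apply Hd; auto.
      - intros n n1 gd. apply (Hd n n1); auto. }
    apply (uf_mono Uq (uf_inter_list Uq _ HYG)).
    intros x _ Ix g Ig. apply (Ix _ (in_map _ _ _ Ig)). }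
  destruct Oq as [_ Hq].
  destruct (uf_nonempty Uq (uf_and Uq YG (Hq mu mu0))) as [x [Sx [HY [_ [x0 xm]]]]].
  exists x. repeat split; auto.
  intros n n1 g Ig g0 gd. destruct (HY g Ig n n1 gd) as [_ [_ Ht]]. exact Ht.
Qed.

End PiecewiseSyndetic.

Definition uf_limit (S : R -> Prop) {X : Type} (t : topology X) (T : R -> X -> X)
  (q : (R -> Prop) -> Prop) (z w : X) : Prop :=
  forall V, open t V -> V w -> q (fun s => S s /\ V (T s z)).

Lemma nbhd_top_and {X : Type} (t : topology X) W1 W2 y :
  nbhd_top t W1 y -> nbhd_top t W2 y -> nbhd_top t (fun z => W1 z /\ W2 z) y.
Proof.
  intros [V1 [O1 [y1 H1]]] [V2 [O2 [y2 H2]]]. exists (fun z => V1 z /\ V2 z).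
  split; [apply open_inter; auto|split; [auto|intros z [a b]; auto]].
Qed.

Lemma closure_K_closed S : closed S (beta_closure S (K_Oplus S)).
Proof.
  intros r [Ur Hr]. split; auto. intros A rA. destruct (Hr A rA) as [q [[_ Hq] qA]]. apply Hq; auto.
Qed.

Section Dynamics.

Context {S : R -> Prop} (HS : dense_subsemigroup S).

Lemma K_closure_K {q} : K_Oplus S q -> beta_closure S (K_Oplus S) q.
Proof. intros Kq. split; [apply (K_Oplus_ultrafilter HS Kq)|]. intros A qA. eauto. Qed.

Lemma closure_K_Oplus {q} : beta_closure S (K_Oplus S) q -> Oplus S q.
Proof.
  intros H. apply Oplus_closed, (beta_closure_mono H). intros k Kk; apply (K_Oplus_Oplus HS Kk).
Qed.

Lemma closure_K_bplus q1 q2 : beta_closure S (K_Oplus S) q1 ->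
  beta_closure S (K_Oplus S) q2 -> beta_closure S (K_Oplus S) (bplus S q1 q2).
Proof.
  intros H1 H2. assert (O1 := closure_K_Oplus H1). assert (O2 := closure_K_Oplus H2).
  split; [apply (bplus_ultrafilter HS); apply Oplus_ultrafilter; auto|].
  intros D HD. destruct H1 as [_ H1]. destruct (H1 _ HD) as [k [Kk kD]].
  exists (bplus S k q2). split; [apply K_Oplus_bplus_r; auto|exact kD].
Qed.

Context {X : Type} (t : topology X) (T : R -> X -> X) (Hdyn : dynamical_system S t T).

Lemma uf_limit_bplus q1 q2 z w v : ultrafilter S q1 -> ultrafilter S q2 ->
  uf_limit S t T q2 z w -> uf_limit S t T q1 w v -> uf_limit S t T (bplus S q1 q2) z v.
Proof.
  destruct Hdyn as [_ [_ [Hc Ha]]]. intros U1 U2 L2 L1 V OV Vv.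
  apply (uf_mono U1 (L1 V OV Vv)). intros s Ss [_ Vs]. split; auto.
  apply (uf_mono U2 (L2 (fun z' => V (T s z')) (Hc s Ss V OV) Vs)).
  intros u Su [_ Vu]. split; auto. split; [apply (dense_subsemigroup_add HS); auto|].
  rewrite <- Ha; auto.
Qed.

Lemma uf_limit_closed z w : closed S (fun q => ultrafilter S q /\ uf_limit S t T q z w).
Proof.
  intros r [Ur Hr]. split; auto. intros V OV Vw. apply NNPP; intro N.
  destruct (Hr _ (uf_compl Ur N)) as [q [[Uq Lq] qN]].
  exact (uf_compl_absurd Uq (Lq V OV Vw) qN).
Qed.

Section Joint.

Variables x y : X.

Let joint (W : X -> Prop) : R -> Prop := fun s => S s /\ W (T s x) /\ W (T s y).

Lemma JIUR0_closure_K_point : JIUR0 S t T x y ->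
  exists q, beta_closure S (K_Oplus S) q /\ forall W, nbhd_top t W y -> q (joint W).
Proof.
  intros HJ.
  set (clK := beta_closure S (K_Oplus S)).
  destruct (closed_family_meet (S := S) (fun N => N = clK \/
      exists W, nbhd_top t W y /\ N = (fun w => ultrafilter S w /\ w (joint W)))) as [q [Uq Hq]].
  - intros N [->|[W [_ ->]]]; [apply closure_K_closed|apply closed_clopen].
  - intros l Hl.
    assert (E : exists Ws, nbhd_top t Ws y /\ forall N, In N l -> N = clK \/
                 forall w, ultrafilter S w -> w (joint Ws) -> N w).
    { clear - Hl. induction l as [|N l IH].
      { exists (fun _ => True). split; [|intros _ []].
        exists (fun _ => True). split; [apply open_full|auto]. }
      destruct IH as [Ws [HWs HN]]; [intros N' I'; apply Hl; right; exact I'|].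
      destruct (Hl N (or_introl eq_refl)) as [EN|[W [HW EN]]].
      - exists Ws. split; auto. intros N' [<-|I']; auto.
      - exists (fun z => Ws z /\ W z). split; [apply nbhd_top_and; auto|].
        intros N' [<-|I'].
        + right. rewrite EN. intros w Uw Hw. split; auto.
          apply (uf_mono Uw Hw). intros s _ [Ss [[_ a] [_ b]]]. split; auto.
        + destruct (HN N' I') as [E|H]; [left; exact E|]. right. intros w Uw Hw. apply H; auto.
          apply (uf_mono Uw Hw). intros s _ [Ss [[a _] [b _]]]. split; auto. }
    destruct E as [Ws [HWs HN]].
    destruct (piecewise_syndetic_K_Oplus HS (joint Ws) (HJ Ws HWs)) as [k [Kk kB]].
    assert (Uk := K_Oplus_ultrafilter HS Kk).
    exists k. split; [exact Uk|].
    intros N I. destruct (HN N I) as [->|H]; [apply K_closure_K; auto|apply H; auto].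
  - exists q. split; [apply Hq; auto|].
    intros W HW. destruct (Hq (fun w => ultrafilter S w /\ w (joint W))) as [_ H]; auto.
    right. exists W; auto.
Qed.

Lemma JIUR0_quasi_central A U : JIUR0 S t T x y -> nbhd_top t U y ->
  (forall s, A s <-> (S s /\ U (T s x))) -> quasi_central_near_zero S A.
Proof.
  intros HJ HU HA.
  set (M := fun q => beta_closure S (K_Oplus S) q /\ uf_limit S t T q x y /\ uf_limit S t T q y y).
  assert (GM : nonempty_closed S M).
  { split; [|split].
    - destruct (JIUR0_closure_K_point HJ) as [q [cq Hq]]. exists q. split; [exact cq|].
      split; intros V OV Vy; apply (uf_mono (proj1 cq) (Hq V ltac:(exists V; auto)));
        intros s _ [Ss [a b]]; auto.
    - intros q [[Uq _] _]; auto.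
    - intros r Hr. split; [|split].
      + apply closure_K_closed, (beta_closure_mono Hr). intros q [c _]; exact c.
      + apply (uf_limit_closed x y), (beta_closure_mono Hr). intros q [[Uq _] [L _]]; auto.
      + apply (uf_limit_closed y y), (beta_closure_mono Hr). intros q [[Uq _] [_ L]]; auto. }
  assert (PM : forall p q, M p -> M q -> M (bplus S p q)).
  { intros p q [cp [Lp1 Lp2]] [cq [Lq1 Lq2]]. assert (Up := proj1 cp). assert (Uq := proj1 cq).
    split; [apply closure_K_bplus; auto|split].
    - apply uf_limit_bplus with (w := y); auto.
    - apply uf_limit_bplus with (w := y); auto. }
  destruct (ellis_idempotent HS M GM PM) as [p [[cp [Lp _]] Ep]].
  exists p. split; [|split; [exact cp|]].
  - split; [exact (proj1 cp)|]. intro B. rewrite Ep. tauto.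
  - destruct HU as [V0 [O0 [y0 H0]]]. apply (uf_mono (proj1 cp) (Lp V0 O0 y0)).
    intros s _ [Ss Vs]. apply HA. auto.
Qed.

End Joint.

End Dynamics.

Definition with_zero (S : R -> Prop) : R -> Prop := fun z => z = 0 \/ S z.

Definition beta0 (S : R -> Prop) : Type := { p : (R -> Prop) -> Prop | ultrafilter (with_zero S) p }.

Lemma beta0_eq {S} (a b : beta0 S) : proj1_sig a = proj1_sig b -> a = b.
Proof.
  destruct a as [a Ha], b as [b Hb]. simpl. intros ->. f_equal. apply proof_irrelevance.
Qed.

Definition beta0_open (S : R -> Prop) (V : beta0 S -> Prop) : Prop :=
  forall q : beta0 S, V q ->
    exists C, proj1_sig q C /\ forall q' : beta0 S, proj1_sig q' C -> V q'.

Lemma beta0_open_full S : beta0_open S (fun _ => True).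
Proof. intros q _. exists (with_zero S). split; auto. apply (uf_full (proj2_sig q)). Qed.

Lemma beta0_open_inter S U V :
  beta0_open S U -> beta0_open S V -> beta0_open S (fun x => U x /\ V x).
Proof.
  intros HU HV q [Uq Vq]. destruct (HU q Uq) as [C1 [q1 H1]]. destruct (HV q Vq) as [C2 [q2 H2]].
  exists (fun x => C1 x /\ C2 x). split; [apply (uf_and (proj2_sig q)); auto|].
  intros q' Hq'. split.
  - apply H1. apply (uf_mono (proj2_sig q') Hq'). intros z _ [a _]; auto.
  - apply H2. apply (uf_mono (proj2_sig q') Hq'). intros z _ [_ b]; auto.
Qed.

Lemma beta0_open_union S (Fam : (beta0 S -> Prop) -> Prop) :
  (forall U, Fam U -> beta0_open S U) -> beta0_open S (fun x => exists U, Fam U /\ U x).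
Proof.
  intros H q [U [FU Uq]]. destruct (H U FU q Uq) as [C [qC HC]]. exists C. split; auto.
  intros q' Hq'. exists U. split; auto.
Qed.

Definition beta0_topology (S : R -> Prop) : topology (beta0 S) :=
  {| open := beta0_open S; open_full := beta0_open_full S;
     open_inter := beta0_open_inter S; open_union := beta0_open_union S |}.

Lemma beta0_compact S : compact_space (beta0_topology S).
Proof.
  intros Fam HO Hcov. apply NNPP; intro Nfin.
  set (G := fun D : R -> Prop => exists C V, Fam V /\
              (forall q' : beta0 S, proj1_sig q' C -> V q') /\ D = (fun z => with_zero S z /\ ~ C z)).
  assert (FG : FIP (with_zero S) G).
  { intros l Hl.
    assert (E : exists lV, (forall V, In V lV -> Fam V) /\
               forall D, In D l -> exists C V, In V lV /\ (forall q' : beta0 S, proj1_sig q' C -> V q') /\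
                                   D = (fun z => with_zero S z /\ ~ C z)).
    { clear - Hl. induction l as [|D l IH]; [exists nil; split; intros _ []|].
      destruct IH as [lV [H1 H2]]; [intros D' I'; apply Hl; right; exact I'|].
      destruct (Hl D (or_introl eq_refl)) as [C [V [FV [HV ED]]]].
      exists (V :: lV). split; [intros V' [<-|I]; auto|].
      intros D' [<-|I]; [exists C, V; split; [left|]; auto|].
      destruct (H2 D' I) as [C' [V' [I' H']]]. exists C', V'. split; [right|]; auto. }
    destruct E as [lV [H1 H2]].
    assert (nc : ~ forall x, exists U, In U lV /\ U x) by (intro Hc; apply Nfin; exists lV; auto).
    apply not_all_ex_not in nc. destruct nc as [q nc].
    apply (uf_nonempty (proj2_sig q)), (uf_inter_list (proj2_sig q)). intros D I.
    destruct (H2 D I) as [C [V [IV [HV ->]]]].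
    apply (uf_compl (proj2_sig q)). intro qC. apply nc. exists V. auto. }
  destruct (ultrafilter_extension G FG) as [r [Ur Hr]].
  destruct (Hcov (exist _ r Ur)) as [V [FV Vr]].
  destruct (HO V FV _ Vr) as [C [rC HC]]. simpl in rC.
  apply (uf_compl_absurd Ur rC). apply Hr. exists C, V. auto.
Qed.

Lemma beta0_hausdorff S : hausdorff (beta0_topology S).
Proof.
  intros a b ne.
  assert (E : exists C, proj1_sig a C /\ ~ proj1_sig b C).
  { apply NNPP; intro N. apply ne, beta0_eq, (uf_eq (proj2_sig a) (proj2_sig b)).
    intros C aC. apply NNPP; intro bC. apply N. eauto. }
  destruct E as [C [aC bC]].
  exists (fun q : beta0 S => proj1_sig q C),
         (fun q : beta0 S => proj1_sig q (fun z => with_zero S z /\ ~ C z)).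
  split; [|split; [|split; [|split]]].
  - intros q qC. exists C. auto.
  - intros q qC. exists (fun z => with_zero S z /\ ~ C z). auto.
  - exact aC.
  - apply (uf_compl (proj2_sig b)); auto.
  - intros z H1 H2. exact (uf_compl_absurd (proj2_sig z) H1 H2).
Qed.

Section UltrafilterFlow.

Context {S : R -> Prop} (HS : dense_subsemigroup S).

Lemma with_zero_add s y : S s -> with_zero S y -> S (s + y).
Proof. intros Ss [->|Sy]; [rewrite Rplus_0_r; auto|apply (dense_subsemigroup_add HS); auto]. Qed.

Lemma shift_ultrafilter s p : S s -> ultrafilter (with_zero S) p ->
  ultrafilter (with_zero S) (fun C => p (shiftset (with_zero S) s C)).
Proof.
  intros Ss Up. split; [|split; [|split; [|split]]].
  - apply (uf_mono Up (uf_full Up)). intros y Sy _. split; auto. right. apply with_zero_add; auto.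
  - intro H. destruct (uf_nonempty Up H) as [y [_ [_ F]]]; exact F.
  - intros A B HA HB. apply (uf_mono Up (uf_and Up HA HB)).
    intros y _ [[a b] [_ c]]. repeat split; auto.
  - intros A B HA AB. apply (uf_mono Up HA). intros y _ [a b]. split; auto.
  - intros A. destruct (classic (p (shiftset (with_zero S) s A))) as [H|H]; [left; auto|right].
    apply (uf_mono Up (uf_compl Up H)).
    intros y Sy [_ N]. split; auto. split; [right; apply with_zero_add; auto|].
    intro a; apply N; split; auto.
Qed.

(* [T_s] is the continuous extension of [z |-> s + z]; it is the identity off [S]. *)
Definition beta0_shift (s : R) (z : beta0 S) : beta0 S :=
  match excluded_middle_informative (S s) with
  | left Hs => exist _ (fun C => proj1_sig z (shiftset (with_zero S) s C))
                 (shift_ultrafilter s (proj1_sig z) Hs (proj2_sig z))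
  | right _ => z
  end.

Lemma beta0_shift_val s z : S s ->
  proj1_sig (beta0_shift s z) = (fun C => proj1_sig z (shiftset (with_zero S) s C)).
Proof.
  intros Ss. unfold beta0_shift.
  destruct (excluded_middle_informative (S s)) as [H|H]; [reflexivity|contradiction].
Qed.

Lemma beta0_dynamical_system : dynamical_system S (beta0_topology S) beta0_shift.
Proof.
  split; [apply beta0_compact|split; [apply beta0_hausdorff|split]].
  - intros s Ss V OV q Vq.
    destruct (OV _ Vq) as [C [qC HC]]. rewrite beta0_shift_val in qC; auto.
    exists (shiftset (with_zero S) s C). split; auto.
    intros q' Hq'. apply HC. rewrite beta0_shift_val; auto.
  - intros s u Ss Su z. apply beta0_eq.
    rewrite !beta0_shift_val; auto; [|apply (dense_subsemigroup_add HS); auto].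
    apply functional_extensionality; intro C. apply propositional_extensionality.
    apply (uf_equiv (proj2_sig z)). intros w Sw. unfold shiftset. rewrite Rplus_assoc. split.
    + intros [_ [_ H]]; split; auto.
    + intros [_ H]; split; auto. split; auto. right. apply with_zero_add; auto.
Qed.

Lemma principal0_ultrafilter : ultrafilter (with_zero S) (fun C => C 0).
Proof.
  split; [left; auto|split; [auto|split; [intros; split; auto|split; [auto|]]]].
  intros C. destruct (classic (C 0)); [left; auto|right]. split; [left|]; auto.
Qed.

Definition principal0 : beta0 S := exist _ (fun C => C 0) principal0_ultrafilter.

Lemma beta0_shift_principal0 s C : S s -> proj1_sig (beta0_shift s principal0) C <-> C s.
Proof.
  intros Ss. rewrite beta0_shift_val; auto. simpl. unfold shiftset. rewrite Rplus_0_r.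
  split; [intros [_ H]; auto|intros H; split; [left|]; auto].
Qed.

Lemma ultrafilter_with_zero p : ultrafilter S p -> ultrafilter (with_zero S) p.
Proof.
  intros Up. split; [|split; [|split; [|split]]].
  - apply (uf_mono Up (uf_full Up)). intros z Sz _. right; auto.
  - apply Up.
  - intros; apply (uf_and Up); auto.
  - intros A B H1 H2. apply (uf_mono Up H1). auto.
  - intros C. destruct (classic (p C)) as [H|H]; [left; auto|right].
    apply (uf_mono Up (uf_compl Up H)). intros z _ [Sz nC]. split; [right|]; auto.
Qed.

(* Since [p + p = p], [C] in [p] gives [{s | C in T_s p}] in [p]. *)
Lemma idempotent_closure_K_JIUR0 p (Up : ultrafilter S p) :
  is_sum S p p p -> beta_closure S (K_Oplus S) p ->
  JIUR0 S (beta0_topology S) beta0_shift principal0 (exist _ p (ultrafilter_with_zero p Up)).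
Proof.
  intros Ep cp W [V [OV [Vy HV]]].
  destruct (OV _ Vy) as [C [pC HC]]. simpl in pC.
  assert (pB : p (fun s => S s /\ W (beta0_shift s principal0) /\
                          W (beta0_shift s (exist _ p (ultrafilter_with_zero p Up))))).
  { assert (H2 : bplus S p p C) by exact (proj1 (Ep C) pC).
    apply (uf_mono Up (uf_and Up pC H2)).
    intros s Ss [Cs [_ Hs]]. split; [auto|split].
    - apply HV, HC. apply beta0_shift_principal0; auto.
    - apply HV, HC. rewrite beta0_shift_val; auto. simpl.
      apply (uf_mono Up Hs). intros z Sz [_ Cz]. split; [right|]; auto. }
  destruct (proj2 cp _ pB) as [k [Kk kB]].
  exact (K_Oplus_piecewise_syndetic HS k _ Kk kB).
Qed.

Lemma quasi_central_dynamical A : (forall s, A s -> S s) -> quasi_central_near_zero S A ->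
  exists (X : Type) (t : topology X) (T : R -> X -> X) (x y : X) (U : X -> Prop),
     dynamical_system S t T /\ JIUR0 S t T x y /\ nbhd_top t U y /\
     (forall s, A s <-> (S s /\ U (T s x))).
Proof.
  intros HAS [p [[Up Ep] [cp pA]]].
  exists (beta0 S), (beta0_topology S), beta0_shift, principal0,
         (exist _ p (ultrafilter_with_zero p Up)), (fun q : beta0 S => proj1_sig q A).
  split; [apply beta0_dynamical_system|split; [apply idempotent_closure_K_JIUR0; auto|split]].
  - exists (fun q : beta0 S => proj1_sig q A). split; [|split; auto].
    intros q qA. exists A. auto.
  - intros s. split.
    + intros As. assert (Ss := HAS s As). split; [auto|]. apply beta0_shift_principal0; auto.
    + intros [Ss H]. apply beta0_shift_principal0 in H; auto.
Qed.

End UltrafilterFlow.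

Theorem theorem3p6 (S A : R -> Prop) :
  dense_subsemigroup S ->
  (forall s, A s -> S s) ->
  (quasi_central_near_zero S A <->
   exists (X : Type) (t : topology X) (T : R -> X -> X) (x y : X) (U : X -> Prop),
     dynamical_system S t T /\ JIUR0 S t T x y /\ nbhd_top t U y /\
     (forall s, A s <-> (S s /\ U (T s x)))).
Proof.
  intros HS HAS. split.
  - apply (quasi_central_dynamical HS A HAS).
  - intros [X [t [T [x [y [U [Hdyn [HJ [HU HA]]]]]]]]].
    exact (JIUR0_quasi_central HS t T Hdyn x y A U HJ HU HA).
Qed.
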